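(* Let $*\in\{\pm,\curlyvee,\Join,1\}$. For every $\phi\in\mathcal{L}$ and every state $\mathfrak{s}$ of the canonical model $\mathfrak{M}^{C}_*$: (1) $\mathfrak{M}^{C}_*,\mathfrak{s}\Vdash^+\phi$ iff $\phi\in\mathbf{h}(\mathfrak{s})$; (2) $\mathfrak{M}^{C}_*,\mathfrak{s}\Vdash^-\phi$ iff ${\sim}\phi\in\mathbf{h}(\mathfrak{s})$.
   Context: Fix a countable set $\mathsf{Prop}$ of propositional variables. The language $\mathcal{L}$ is given by the grammar $\phi::=p\mid{\sim}\phi\mid(\phi\wedge\phi)\mid(\phi\vee\phi)\mid(\phi\to\phi)\mid\Box\phi\mid\Diamond\phi$ with $p\in\mathsf{Prop}$. $\phi\leftrightarrow\chi$ abbreviates $(\phi\to\chi)\wedge(\chi\to\phi)$. Semantics. A structure $\langle W,\le,R^+_\Box,R^-_\Box,R^+_\Diamond,R^-_\Diamond,v^+,v^-\rangle$ with $W\ne\varnothing$, $\le$ a preorder, four arbitrary binary relations, and $v^+,v^-:\mathsf{Prop}\to2^W$ upward closed under $\le$ is a $\mathsf{CN4K}$ model; $R(w)=\{w'\mid wRw'\}$. Support: $w\Vdash^\pm p$ iff $w\in v^\pm(p)$; $w\Vdash^+{\sim}\phi$ iff $w\Vdash^-\phi$; $w\Vdash^-{\sim}\phi$ iff $w\Vdash^+\phi$; $w\Vdash^+\phi\wedge\chi$ iff both; $w\Vdash^-\phi\wedge\chi$ iff $w\Vdash^-\phi$ or $w\Vdash^-\chi$; $w\Vdash^+\phi\vee\chi$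 iff $w\Vdash^+\phi$ or $w\Vdash^+\chi$; $w\Vdash^-\phi\vee\chi$ iff both negatively supported; $w\Vdash^+\phi\to\chi$ iff for all $w'\ge w$, $w'\Vdash^+\phi$ implies $w'\Vdash^+\chi$; $w\Vdash^-\phi\to\chi$ iff $w\Vdash^+\phi$ and $w\Vdash^-\chi$; $w\Vdash^+\Box\phi$ iff $\forall w'\ge w\ \forall w''\in R^+_\Box(w')$: $w''\Vdash^+\phi$; $w\Vdash^-\Box\phi$ iff $\forall w'\ge w\ \exists w''\in R^-_\Box(w')$: $w''\Vdash^-\phi$; $w\Vdash^+\Diamond\phi$ iff $\forall w'\ge w\ \exists w''\in R^+_\Diamond(w')$: $w''\Vdash^+\phi$; $w\Vdash^-\Diamond\phi$ iff $\forall w'\ge w\ \forall w''\in R^-_\Diamond(w')$: $w''\Vdash^-\phi$. Calculi. $\mathcal{H}\mathsf{N4}$ has as axioms all $\mathcal{L}$-instances of: $\phi\to(\chi\to\phi)$; $(\phi\to(\chi\to\psi))\to((\phi\to\chi)\to(\phi\to\psi))$; $\phi\wedge\chi\to\phi$; $\phi\wedge\chi\to\chi$; $\phi\to(\chi\to\phi\wedge\chi)$; $\phi\to\phi\vee\chi$; $\chi\to\phi\vee\chi$; $(\phi\to\psi)\to((\chi\to\psi)\to(\phi\vee\chi\to\psi))$; ${\sim}{\sim}\phi\leftrightarrow\phi$; ${\sim}(\phi\wedge\chi)\leftrightarrow({\sim}\phi\vee{\sim}\chi)$; ${\sim}(\phi\vee\chi)\leftrightarrow({\sim}\phi\wedge{\sim}\chi)$;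 ${\sim}(\phi\to\chi)\leftrightarrow(\phi\wedge{\sim}\chi)$; and modus ponens. $\mathcal{H}\mathsf{CN4K}$ adds the axiom schemes $\Box(\phi\to\phi)$; ${\sim}\Diamond{\sim}(\phi\to\phi)$; $(\Box\phi\wedge\Box\chi)\to\Box(\phi\wedge\chi)$; $({\sim}\Diamond\phi\wedge{\sim}\Diamond\chi)\to{\sim}\Diamond(\phi\vee\chi)$, and the rules: from $\vdash\phi\to\chi$ infer $\vdash\Box\phi\to\Box\chi$; from $\vdash\phi\to\chi$ infer $\vdash\Diamond\phi\to\Diamond\chi$; from $\vdash{\sim}\phi\to{\sim}\chi$ infer $\vdash{\sim}\Box\phi\to{\sim}\Box\chi$; from $\vdash{\sim}\phi\to{\sim}\chi$ infer $\vdash{\sim}\Diamond\phi\to{\sim}\Diamond\chi$. Additional schemes: $\pm_\Box$: $\Box(\phi\to\chi)\to(\Diamond\phi\to\Diamond\chi)$; $\pm_\Diamond$: ${\sim}\Diamond{\sim}({\sim}\phi\to{\sim}\chi)\to({\sim}\Box\phi\to{\sim}\Box\chi)$; $\curlyvee_\Box$: $\Box(\phi\to\chi)\to({\sim}\Box{\sim}\phi\to{\sim}\Box{\sim}\chi)$; $\curlyvee_\Diamond$: ${\sim}\Diamond{\sim}(\phi\to\chi)\to(\Diamond\phi\to\Diamond\chi)$; $\Join_\Box$: $\Box\phi\leftrightarrow{\sim}\Diamond{\sim}\phi$; $\Join_\Diamond$: $\Diamond\phi\leftrightarrow{\sim}\Box{\sim}\phi$. $\mathcal{H}\mathsf{CN4K}^\pm$,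 $\mathcal{H}\mathsf{CN4K}^\curlyvee$, $\mathcal{H}\mathsf{CN4K}^{\Join}$ are $\mathcal{H}\mathsf{CN4K}$ plus $\{\pm_\Box,\pm_\Diamond\}$, $\{\curlyvee_\Box,\curlyvee_\Diamond\}$, $\{\Join_\Box,\Join_\Diamond\}$ respectively; $\mathcal{H}\mathsf{CN4K}^1$ is $\mathcal{H}\mathsf{CN4K}$ plus all six. $\Gamma\vdash_{\mathcal{H}\mathsf{L}}\phi$ means there is a finite sequence ending in $\phi$ of axiom instances, members of $\Gamma$, and rule consequences of earlier members, the modal rules being applied only to theorems. Canonical models. For fixed $*$, a set $\Xi\subseteq\mathcal{L}$ is saturated if it is deductively closed under $\vdash_{\mathcal{H}\mathsf{CN4K}^*}$ and prime ($\xi\vee\xi'\in\Xi$ implies $\xi\in\Xi$ or $\xi'\in\Xi$). A segment is a tuple $\mathfrak{s}=\langle\Xi,\Phi^+_\Box,\Phi^-_\Box,\Phi^+_\Diamond,\Phi^-_\Diamond\rangle$ where $\Xi$ is saturated (the head, $\mathbf{h}(\mathfrak{s})=\Xi$) and each $\Phi^\bullet_\heartsuit$ is a set (possibly empty) of saturated sets such that: if $\Box\phi\in\Xi$ then $\phi\in\Delta$ for every $\Delta\in\Phi^+_\Box$; if ${\sim}\Box\phi\in\Xi$ then ${\sim}\phi\in\Delta$ for some $\Delta\in\Phi^-_\Box$; if $\Diamond\phi\in\Xi$ then $\phi\in\Delta$ for some $\Delta\in\Phi^+_\Diamond$; if ${\sim}\Diamond\phi\in\Xi$ then ${\sim}\phi\in\Delta$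 for every $\Delta\in\Phi^-_\Diamond$. A segment is a $\pm$-segment if $\Phi^+_\Box=\Phi^+_\Diamond$ and $\Phi^-_\Box=\Phi^-_\Diamond$; a $\curlyvee$-segment if $\Phi^+_\Box=\Phi^-_\Box$ and $\Phi^+_\Diamond=\Phi^-_\Diamond$; a $\Join$-segment if $\Phi^+_\Box=\Phi^-_\Diamond$ and $\Phi^+_\Diamond=\Phi^-_\Box$; a $1$-segment if all four families coincide. $\mathfrak{M}^{C}_*$ has as states all $*$-segments, $\mathfrak{s}\le^{C}\mathfrak{s}'$ iff $\mathbf{h}(\mathfrak{s})\subseteq\mathbf{h}(\mathfrak{s}')$, $\mathfrak{s}\,{R^\bullet_\heartsuit}^{C}\,\mathfrak{s}'$ iff $\mathbf{h}(\mathfrak{s}')\in\Phi^\bullet_\heartsuit$ (the corresponding component of $\mathfrak{s}$), $\mathfrak{s}\in{v^+}^{C}(p)$ iff $p\in\mathbf{h}(\mathfrak{s})$, $\mathfrak{s}\in{v^-}^{C}(p)$ iff ${\sim}p\in\mathbf{h}(\mathfrak{s})$. *)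

Set Implicit Arguments.

Inductive form : Type :=
| Var  : nat -> form
| Neg  : form -> form            (* strong negation ~ *)
| Conj : form -> form -> form
| Disj : form -> form -> form
| Imp  : form -> form -> form
| Box  : form -> form
| Dia  : form -> form.

Definition Iff (a b : form) : form := Conj (Imp a b) (Imp b a).

Inductive star : Type := Spm | Svee | Sjoin | Sone.

Inductive axN4 : form -> Prop :=
| A1 a b : axN4 (Imp a (Imp b a))
| A2 a b c : axN4 (Imp (Imp a (Imp b c)) (Imp (Imp a b) (Imp a c)))
| A3 a b : axN4 (Imp (Conj a b) a)
| A4 a b : axN4 (Imp (Conj a b) b)
| A5 a b : axN4 (Imp a (Imp b (Conj a b)))
| A6 a b : axN4 (Imp a (Disj a b))
| A7 a b : axN4 (Imp b (Disj a b))
| A8 a b c : axN4 (Imp (Imp a c) (Imp (Imp b c) (Imp (Disj a b) c)))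
| N1 a : axN4 (Iff (Neg (Neg a)) a)
| N2 a b : axN4 (Iff (Neg (Conj a b)) (Disj (Neg a) (Neg b)))
| N3 a b : axN4 (Iff (Neg (Disj a b)) (Conj (Neg a) (Neg b)))
| N4 a b : axN4 (Iff (Neg (Imp a b)) (Conj a (Neg b))).

Inductive axCN4K : form -> Prop :=
| K1 a : axCN4K (Box (Imp a a))
| K2 a : axCN4K (Neg (Dia (Neg (Imp a a))))
| K3 a b : axCN4K (Imp (Conj (Box a) (Box b)) (Box (Conj a b)))
| K4 a b : axCN4K (Imp (Conj (Neg (Dia a)) (Neg (Dia b))) (Neg (Dia (Disj a b)))).

Definition ax_pmB (a b : form) : form := Imp (Box (Imp a b)) (Imp (Dia a) (Dia b)).
Definition ax_pmD (a b : form) : form :=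
  Imp (Neg (Dia (Neg (Imp (Neg a) (Neg b))))) (Imp (Neg (Box a)) (Neg (Box b))).
Definition ax_veeB (a b : form) : form :=
  Imp (Box (Imp a b)) (Imp (Neg (Box (Neg a))) (Neg (Box (Neg b)))).
Definition ax_veeD (a b : form) : form :=
  Imp (Neg (Dia (Neg (Imp a b)))) (Imp (Dia a) (Dia b)).
Definition ax_joinB (a : form) : form := Iff (Box a) (Neg (Dia (Neg a))).
Definition ax_joinD (a : form) : form := Iff (Dia a) (Neg (Box (Neg a))).

Inductive ax_pm : form -> Prop :=
| Pm1 a b : ax_pm (ax_pmB a b)
| Pm2 a b : ax_pm (ax_pmD a b).
Inductive ax_vee : form -> Prop :=
| Ve1 a b : ax_vee (ax_veeB a b)
| Ve2 a b : ax_vee (ax_veeD a b).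
Inductive ax_join : form -> Prop :=
| Jo1 a : ax_join (ax_joinB a)
| Jo2 a : ax_join (ax_joinD a).

Definition ax_extra (s : star) (f : form) : Prop :=
  match s with
  | Spm => ax_pm f
  | Svee => ax_vee f
  | Sjoin => ax_join f
  | Sone => ax_pm f \/ ax_vee f \/ ax_join f
  end.

Definition axiom (s : star) (f : form) : Prop :=
  axN4 f \/ axCN4K f \/ ax_extra s f.

Definition fset := form -> Prop.
Definition emptyset : fset := fun _ => False.

Inductive derivable (s : star) (G : fset) : form -> Prop :=
| d_ax f : axiom s f -> derivable s G f
| d_hyp f : G f -> derivable s G f
| d_mp a b : derivable s G (Imp a b) -> derivable s G a -> derivable s G b
| d_boxP a b : derivable s emptyset (Imp a b) ->
    derivable s G (Imp (Box a) (Box b))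
| d_diaP a b : derivable s emptyset (Imp a b) ->
    derivable s G (Imp (Dia a) (Dia b))
| d_boxN a b : derivable s emptyset (Imp (Neg a) (Neg b)) ->
    derivable s G (Imp (Neg (Box a)) (Neg (Box b)))
| d_diaN a b : derivable s emptyset (Imp (Neg a) (Neg b)) ->
    derivable s G (Imp (Neg (Dia a)) (Neg (Dia b))).

Definition saturated (s : star) (X : fset) : Prop :=
  (forall f, derivable s X f -> X f) /\
  (forall a b, X (Disj a b) -> X a \/ X b).

Definition family := fset -> Prop.
Definition same_set (X Y : fset) : Prop := forall f, X f <-> Y f.
Definition mem_fam (P : family) (X : fset) : Prop :=
  exists Y, P Y /\ same_set Y X.
Definition same_fam (P Q : family) : Prop := forall X, mem_fam P X <-> mem_fam Q X.

Definition seg_shape (s : star) (Bp Bn Dp Dn : family) : Prop :=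
  match s with
  | Spm => same_fam Bp Dp /\ same_fam Bn Dn
  | Svee => same_fam Bp Bn /\ same_fam Dp Dn
  | Sjoin => same_fam Bp Dn /\ same_fam Dp Bn
  | Sone => same_fam Bp Bn /\ same_fam Bp Dp /\ same_fam Bp Dn
  end.

Record segment (s : star) : Type := Segment {
  head : fset;
  fBp : family; fBn : family; fDp : family; fDn : family;
  head_sat : saturated s head;
  fBp_sat : forall X, fBp X -> saturated s X;
  fBn_sat : forall X, fBn X -> saturated s X;
  fDp_sat : forall X, fDp X -> saturated s X;
  fDn_sat : forall X, fDn X -> saturated s X;
  seg_Bp : forall a, head (Box a) -> forall X, fBp X -> X a;
  seg_Bn : forall a, head (Neg (Box a)) -> exists X, fBn X /\ X (Neg a);
  seg_Dp : forall a, head (Dia a) -> exists X, fDp X /\ X a;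
  seg_Dn : forall a, head (Neg (Dia a)) -> forall X, fDn X -> X (Neg a);
  seg_sh : seg_shape s fBp fBn fDp fDn
}.
Arguments head {s}. Arguments fBp {s}. Arguments fBn {s}.
Arguments fDp {s}. Arguments fDn {s}.

(* CN4K structures (underlying data; the frame conditions are not needed to
   state the support relation). *)
Record structure : Type := Structure {
  W : Type;
  le : W -> W -> Prop;
  RBp : W -> W -> Prop; RBn : W -> W -> Prop;
  RDp : W -> W -> Prop; RDn : W -> W -> Prop;
  vp : nat -> W -> Prop; vn : nat -> W -> Prop
}.

(* support: supp M f true w  is  w ||-+ f ; supp M f false w  is  w ||-- f *)
Fixpoint supp (M : structure) (f : form) (b : bool) (w : W M) {struct f} : Prop :=
  match f with
  | Var p => if b then vp M p w else vn M p w
  | Neg a => supp M a (negb b) w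
  | Conj a c => if b then supp M a true w /\ supp M c true w
                else supp M a false w \/ supp M c false w
  | Disj a c => if b then supp M a true w \/ supp M c true w
                else supp M a false w /\ supp M c false w
  | Imp a c => if b then (forall w', le M w w' -> supp M a true w' -> supp M c true w')
               else supp M a true w /\ supp M c false w
  | Box a => if b then (forall w', le M w w' -> forall w'', RBp M w' w'' -> supp M a true w'')
             else (forall w', le M w w' -> exists w'', RBn M w' w'' /\ supp M a false w'')
  | Dia a => if b then (forall w', le M w w' -> exists w'', RDp M w' w'' /\ supp M a true w'')
             else (forall w', le M w w' -> forall w'', RDn M w' w'' -> supp M a false w'')
  end.

Definition canon (s : star) : structure := {|
  W := segment s;
  le := fun x y => forall f, head x f -> head y f;
  RBp := fun x y => mem_fam (fBp x) (head y);
  RBn := fun x y => mem_fam (fBn x) (head y);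
  RDp := fun x y => mem_fam (fDp x) (head y);
  RDn := fun x y => mem_fam (fDn x) (head y);
  vp := fun p x => head x (Var p);
  vn := fun p x => head x (Neg (Var p))
|}.

(* Each "if" direction is read off the
   conditions defining a segment.  For "only if", a formula missing from the head X
   of a segment is refuted in a new segment with the same head X.  Lindenbaum's
   lemma gives saturated sets that contain {f | Box f in X} or {f | ~Dia~f in X}
   (both deductively closed, by the K-style axioms) and avoid a given formula; the
   set of all formulas is saturated and meets every existential condition.  To
   refute ~Box a (resp. Dia a), the family carrying that existential condition is
   restricted to sets avoiding ~a (resp. a).  The shape constraint of the extension
   may put the other existential condition on the same family, and the extra axioms
   of the extension are exactly what keeps the restricted family rich enough. *)

From Stdlib Require Import Classical Lia Cantor.

Definition incl (G H : fset) : Prop := forall f, G f -> H f.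
Definition add (G : fset) (e : form) : fset := fun f => G f \/ f = e.

Section Derivability.
Context {s : star}.

Lemma derivable_cut {G H f} :
  derivable s G f -> (forall g, G g -> derivable s H g) -> derivable s H f.
Proof.
  intros D; revert H; induction D; intros H0 HG.
  - now apply d_ax.
  - auto.
  - eapply d_mp; eauto.
  - now apply d_boxP.
  - now apply d_diaP.
  - now apply d_boxN.
  - now apply d_diaN.
Qed.

Lemma derivable_mono {G H f} : derivable s G f -> incl G H -> derivable s H f.
Proof. intros D HGH; apply (derivable_cut D); intros g Hg; apply d_hyp, HGH, Hg. Qed.

Lemma derivable_theorem G f : derivable s emptyset f -> derivable s G f.
Proof. intro D; apply (derivable_mono D); intros g []. Qed.

Lemma derivable_N4 G f : axN4 f -> derivable s G f.
Proof. intro; apply d_ax; now left. Qed.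

Lemma derivable_CN4K G f : axCN4K f -> derivable s G f.
Proof. intro; apply d_ax; right; now left. Qed.

Lemma derivable_refl G a : derivable s G (Imp a a).
Proof.
  apply (d_mp (a := Imp a (Imp a a))); [|apply derivable_N4, A1].
  apply (d_mp (a := Imp a (Imp (Imp a a) a))); apply derivable_N4; constructor.
Qed.

Lemma deduction {G e c} : derivable s (add G e) c -> derivable s G (Imp e c).
Proof.
  intro D; remember (add G e) as G' eqn:E; induction D; subst;
    try (eapply d_mp; [apply derivable_N4, A1|]; now constructor).
  - destruct H as [H| ->]; [|apply derivable_refl].
    eapply d_mp; [apply derivable_N4, A1|]; now apply d_hyp.
  - eapply d_mp; [eapply d_mp; [apply derivable_N4, A2|]|]; eauto.
Qed.

Lemma derivable_added G e : derivable s (add G e) e.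
Proof. apply d_hyp; now right. Qed.

Lemma derivable_iff_mp {G} a b :
  derivable s G (Iff a b) -> derivable s G a -> derivable s G b.
Proof. intros Hab Ha; refine (d_mp _ Ha); exact (d_mp (derivable_N4 _ _ (A3 _ _)) Hab). Qed.

Lemma derivable_iff_mpr {G} a b :
  derivable s G (Iff a b) -> derivable s G b -> derivable s G a.
Proof. intros Hab Hb; refine (d_mp _ Hb); exact (d_mp (derivable_N4 _ _ (A4 _ _)) Hab). Qed.

Lemma derivable_dneg_intro a : derivable s emptyset (Imp a (Neg (Neg a))).
Proof.
  apply deduction, derivable_iff_mpr with a; [apply derivable_N4, N1|apply derivable_added].
Qed.

Lemma derivable_dneg_elim a : derivable s emptyset (Imp (Neg (Neg a)) a).
Proof.
  apply deduction, derivable_iff_mp with (Neg (Neg a));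
    [apply derivable_N4, N1|apply derivable_added].
Qed.

End Derivability.

Definition closed (s : star) (T : fset) : Prop := forall f, derivable s T f -> T f.

Section ClosedSets.
Context {s : star} {T : fset}.
Hypothesis T_closed : closed s T.

Lemma closed_axiom {f} : axiom s f -> T f.
Proof. intro; now apply T_closed, d_ax. Qed.

Lemma closed_mp {a b} : T (Imp a b) -> T a -> T b.
Proof. intros Hab Ha; apply T_closed; eapply d_mp; apply d_hyp; eauto. Qed.

Lemma closed_theorem_mp {a b} : derivable s emptyset (Imp a b) -> T a -> T b.
Proof.
  intros Hab Ha; apply T_closed; eapply d_mp; [apply derivable_theorem, Hab|now apply d_hyp].
Qed.

Lemma closed_theorem_mp2 {a b c} :
  derivable s emptyset (Imp a (Imp b c)) -> T a -> T b -> T c.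
Proof. intros Habc Ha; apply closed_mp; exact (closed_theorem_mp Habc Ha). Qed.

Lemma closed_iff {a b} : derivable s emptyset (Iff a b) -> T a <-> T b.
Proof.
  intro Hab; split; apply closed_theorem_mp, deduction.
  - apply (derivable_iff_mp a b); [apply derivable_theorem, Hab|apply derivable_added].
  - apply (derivable_iff_mpr _ b); [apply derivable_theorem, Hab|apply derivable_added].
Qed.

Lemma closed_conj a b : T (Conj a b) <-> T a /\ T b.
Proof.
  split.
  - intro H; split; refine (closed_theorem_mp _ H); apply derivable_N4; constructor.
  - intros [Ha Hb]; exact (closed_theorem_mp2 (derivable_N4 _ _ (A5 _ _)) Ha Hb).
Qed.

End ClosedSets.

Lemma saturated_closed {s X} : saturated s X -> closed s X.
Proof. now intros [H _]. Qed.

Lemma saturated_disj {s X} a b : saturated s X -> X (Disj a b) <-> X a \/ X b.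
Proof.
  intros S; split; [apply S|].
  intros [H|H]; refine (closed_theorem_mp (saturated_closed S) _ H);
    apply derivable_N4; constructor.
Qed.

Lemma derivable_closed {s} G : closed s (derivable s G).
Proof. intros f D; exact (derivable_cut D (fun g Hg => Hg)). Qed.

Lemma derivable_compose {s a b c} :
  derivable s emptyset (Imp a b) -> derivable s emptyset (Imp b c) ->
  derivable s emptyset (Imp a c).
Proof.
  intros Hab Hbc; apply deduction.
  apply (closed_theorem_mp (derivable_closed _) Hbc).
  apply (closed_theorem_mp (derivable_closed _) Hab), derivable_added.
Qed.

Lemma derivable_dneg_mono {s a b} :
  derivable s emptyset (Imp a b) ->
  derivable s emptyset (Imp (Neg (Neg a)) (Neg (Neg b))).
Proof.
  intro Hab; apply (derivable_compose (derivable_dneg_elim a)).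
  exact (derivable_compose Hab (derivable_dneg_intro b)).
Qed.

Lemma derivable_neg_disj_neg {s} a b :
  derivable s emptyset (Imp (Neg (Disj (Neg a) (Neg b))) (Neg (Neg (Conj a b)))).
Proof.
  apply deduction.
  pose proof (derivable_closed (s := s) (add emptyset (Neg (Disj (Neg a) (Neg b))))) as Cn.
  assert (Hab : derivable s (add emptyset (Neg (Disj (Neg a) (Neg b))))
                  (Conj (Neg (Neg a)) (Neg (Neg b)))).
  { apply (closed_iff Cn (derivable_N4 _ _ (N3 _ _))), derivable_added. }
  apply (closed_conj Cn) in Hab as [Ha Hb].
  apply (closed_theorem_mp Cn (derivable_dneg_intro _)), (closed_conj Cn).
  split; apply (closed_theorem_mp Cn (derivable_dneg_elim _)); assumption.
Qed.

Fixpoint form_code (f : form) : nat :=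
  match f with
  | Var p => to_nat (0, p)
  | Neg a => to_nat (1, form_code a)
  | Conj a b => to_nat (2, to_nat (form_code a, form_code b))
  | Disj a b => to_nat (3, to_nat (form_code a, form_code b))
  | Imp a b => to_nat (4, to_nat (form_code a, form_code b))
  | Box a => to_nat (5, form_code a)
  | Dia a => to_nat (6, form_code a)
  end.

Lemma to_nat_inj p q : to_nat p = to_nat q -> p = q.
Proof. intro H; rewrite <- (cancel_of_to p), <- (cancel_of_to q), H; reflexivity. Qed.

Lemma form_code_inj f g : form_code f = form_code g -> f = g.
Proof.
  revert g; induction f; destruct g; cbn [form_code]; intro H;
    apply to_nat_inj, pair_equal_spec in H as [Htag H]; try discriminate;
    try (apply to_nat_inj, pair_equal_spec in H as [H1 H]);
    f_equal; auto.
Qed.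

Section Lindenbaum.
Context {s : star}.
Variables (G : fset) (c : form).

Fixpoint stage (n : nat) : fset :=
  match n with
  | 0 => G
  | S n => fun g => stage n g \/
                    (form_code g = n /\ ~ derivable s (add (stage n) g) c)
  end.

Definition limit : fset := fun g => exists n, stage n g.

Lemma stage_mono n m : n <= m -> incl (stage n) (stage m).
Proof. induction 1; intros g Hg; simpl; auto. Qed.

Hypothesis G_consistent : ~ derivable s G c.

Lemma stage_consistent n : ~ derivable s (stage n) c.
Proof.
  induction n as [|n IH]; simpl; auto.
  destruct (classic (exists g, form_code g = n /\ ~ derivable s (add (stage n) g) c))
    as [[g [Hg Hgc]]|Hnone]; intro D; [apply Hgc|apply IH]; apply (derivable_mono D).
  - intros h [Hh|[Hh _]]; [now left|right; apply form_code_inj; congruence].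
  - intros h [Hh|[Hh Hhc]]; [exact Hh|destruct Hnone; eauto].
Qed.

Lemma limit_derivable_stage {f} : derivable s limit f -> exists n, derivable s (stage n) f.
Proof.
  intro D; remember limit as L eqn:E.
  induction D as [L f Hax|L f Hf|L a b Dab IHab Da IHa| | | |]; subst.
  - exists 0; now apply d_ax.
  - destruct Hf as [n Hn]; exists n; now apply d_hyp.
  - destruct IHab as [n Hn], IHa as [m Hm]; auto.
    exists (max n m); eapply d_mp; eapply derivable_mono; eauto; apply stage_mono; lia.
  - exists 0; now apply d_boxP.
  - exists 0; now apply d_diaP.
  - exists 0; now apply d_boxN.
  - exists 0; now apply d_diaN.
Qed.

Lemma limit_consistent : ~ derivable s limit c.
Proof. intro D; destruct (limit_derivable_stage D) as [n Hn]; exact (stage_consistent n Hn). Qed.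

Lemma limit_maximal {g} : ~ limit g -> derivable s limit (Imp g c).
Proof.
  intro Hg; apply deduction, NNPP; intro D.
  apply Hg; exists (S (form_code g)); right; split; [reflexivity|].
  intro D'; apply D, (derivable_mono D').
  intros h [Hh| ->]; [left; now exists (form_code g)|now right].
Qed.

Lemma lindenbaum : exists D, saturated s D /\ incl G D /\ ~ D c.
Proof.
  exists limit; split; [split|split].
  - intros f Df; apply NNPP; intro Hf.
    exact (limit_consistent (d_mp (limit_maximal Hf) Df)).
  - intros a b Hab; apply NNPP; intro Hn; apply limit_consistent.
    apply (d_mp (a := Disj a b)); [|now apply d_hyp].
    apply (d_mp (a := Imp b c)); [|apply limit_maximal; tauto].
    apply (d_mp (a := Imp a c)); [|apply limit_maximal; tauto].
    apply derivable_N4, A8.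
  - intros g Hg; now exists 0.
  - intro Hc; now apply limit_consistent, d_hyp.
Qed.

End Lindenbaum.

Definition sat_supersets (s : star) (T : fset) : family :=
  fun Y => saturated s Y /\ incl T Y.

Definition avoiding (F : family) (c : form) : family := fun Y => F Y /\ ~ Y c.

Section Extension.
Context {s : star} {T : fset}.
Hypothesis T_closed : closed s T.

Lemma extend_avoiding c : ~ T c -> exists D, sat_supersets s T D /\ ~ D c.
Proof.
  intro Hc; destruct (lindenbaum (s := s) T c) as (D & SD & HTD & HDc).
  - intro D; exact (Hc (T_closed _ D)).
  - now exists D.
Qed.

Lemma extend_refuting e c :
  ~ T (Imp e c) -> exists D, avoiding (sat_supersets s T) c D /\ D e.
Proof.
  intro Hec; destruct (lindenbaum (s := s) (add T e) c) as (D & SD & HTD & HDc).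
  - intro D; exact (Hec (T_closed _ (deduction D))).
  - exists D; split; [split; [split; [exact SD|]|exact HDc]|].
    + intros f Hf; apply HTD; now left.
    + apply HTD; now right.
Qed.

End Extension.

Section NormalOperator.
Context {s : star} (X : fset) (M : form -> form).
Hypothesis M_mono : forall a b, derivable s emptyset (Imp a b) -> X (M a) -> X (M b).
Hypothesis M_refl : forall a, X (M (Imp a a)).
Hypothesis M_conj : forall a b, X (M a) -> X (M b) -> X (M (Conj a b)).

Lemma normal_theorem f : derivable s emptyset f -> X (M f).
Proof.
  intro Hf; apply (M_mono (Imp f f)), M_refl.
  exact (d_mp (derivable_N4 _ _ (A1 _ _)) Hf).
Qed.

Lemma normal_preimage_closed : closed s (fun f => X (M f)).
Proof.
  intros f D; remember (fun f => X (M f)) as T eqn:E.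
  induction D as [T f Hax|T f Hf|T a b _ IHab _ IHa| | | |]; subst;
    try (apply normal_theorem; now constructor).
  - exact Hf.
  - apply (M_mono (Conj (Imp a b) a)), M_conj; auto.
    apply deduction; set (Cn := derivable_closed (s := s) (add emptyset (Conj (Imp a b) a))).
    destruct (proj1 (closed_conj Cn _ _) (derivable_added _ _)) as [Hab Ha].
    exact (closed_mp Cn Hab Ha).
Qed.

End NormalOperator.

Definition box_core (X : fset) : fset := fun f => X (Box f).
Definition dia_core (X : fset) : fset := fun f => X (Neg (Dia (Neg f))).

Definition box_successors s X : family := sat_supersets s (box_core X).
Definition dia_successors s X : family := sat_supersets s (dia_core X).
Definition all_saturated s : family := sat_supersets s (derivable s emptyset).

Section Cores.
Context {s : star} {X : fset}.
Hypothesis X_closed : closed s X.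

Lemma box_core_closed : closed s (box_core X).
Proof.
  apply (normal_preimage_closed X Box).
  - intros a b Hab; apply (closed_theorem_mp X_closed), d_boxP, Hab.
  - intro a; apply (closed_axiom X_closed); right; left; constructor.
  - intros a b Ha Hb; apply (closed_theorem_mp X_closed (derivable_CN4K _ _ (K3 a b))).
    now apply (closed_conj X_closed).
Qed.

Lemma dia_core_closed : closed s (dia_core X).
Proof.
  apply (normal_preimage_closed X (fun f => Neg (Dia (Neg f)))).
  - intros a b Hab; apply (closed_theorem_mp X_closed), d_diaN, derivable_dneg_mono, Hab.
  - intro a; apply (closed_axiom X_closed); right; left; constructor.
  - intros a b Ha Hb.
    apply (closed_theorem_mp X_closed (d_diaN _ (derivable_neg_disj_neg a b))).
    apply (closed_theorem_mp X_closed (derivable_CN4K _ _ (K4 _ _))).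
    now apply (closed_conj X_closed).
Qed.

Lemma dia_core_neg a : dia_core X (Neg a) <-> X (Neg (Dia a)).
Proof.
  split; apply (closed_theorem_mp X_closed), d_diaN;
    [apply derivable_dneg_elim|apply derivable_dneg_intro].
Qed.

Lemma neg_box_dneg a : X (Neg (Box a)) <-> X (Neg (Box (Neg (Neg a)))).
Proof.
  split; apply (closed_theorem_mp X_closed), d_boxN;
    [apply derivable_dneg_intro|apply derivable_dneg_elim].
Qed.

Lemma box_core_dia_core_join :
  (forall a, axiom s (ax_joinB a)) -> forall f, box_core X f <-> dia_core X f.
Proof. intros HJ f; apply (closed_iff X_closed), d_ax, HJ. Qed.

Lemma box_dia_successors_join :
  (forall a, axiom s (ax_joinB a)) -> forall Y, box_successors s X Y <-> dia_successors s X Y.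
Proof.
  intros HJ Y; unfold box_successors, dia_successors, sat_supersets, incl.
  setoid_rewrite (box_core_dia_core_join HJ); reflexivity.
Qed.

Lemma dia_neg_box_neg_join a :
  axiom s (ax_joinD a) -> X (Dia a) <-> X (Neg (Box (Neg a))).
Proof. intro HJ; apply (closed_iff X_closed), d_ax, HJ. Qed.

End Cores.

(* The set of all formulas is saturated, N4 being paraconsistent; it witnesses
   every existential requirement on a family that is not restricted. *)
Definition all_formulas : fset := fun _ => True.

Lemma all_formulas_sat_supersets s T : sat_supersets s T all_formulas.
Proof. split; [split|]; [intros; exact I|intros; left; exact I|intros f _; exact I]. Qed.

Lemma segment_of_families {s X} (Bp Bn Dp Dn : family) :
  saturated s X ->
  (forall Y, Bp Y -> box_successors s X Y) ->
  (forall Y, Bn Y -> saturated s Y) ->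
  (forall Y, Dp Y -> saturated s Y) ->
  (forall Y, Dn Y -> dia_successors s X Y) ->
  (forall a, X (Neg (Box a)) -> exists Y, Bn Y /\ Y (Neg a)) ->
  (forall a, X (Dia a) -> exists Y, Dp Y /\ Y a) ->
  seg_shape s Bp Bn Dp Dn ->
  exists y : segment s,
    head y = X /\ fBp y = Bp /\ fBn y = Bn /\ fDp y = Dp /\ fDn y = Dn.
Proof.
  intros HX HBp HBn HDp HDn WBn WDp Hshape.
  unshelve refine (ex_intro _ (@Segment s X Bp Bn Dp Dn HX _ HBn HDp _ _ WBn WDp _ Hshape) _).
  - intros Y HY; apply HBp, HY.
  - intros Y HY; apply HDn, HY.
  - intros a Ha Y HY; apply (HBp Y HY), Ha.
  - intros a Ha Y HY; apply (HDn Y HY), (dia_core_neg (saturated_closed HX)), Ha.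
  - repeat split.
Qed.

Ltac extra_axiom :=
  right; right; simpl;
  solve [constructor | left; constructor | right; left; constructor | right; right; constructor].

Ltac family_bookkeeping :=
  first [ intros ? HY;
          unfold avoiding, box_successors, dia_successors, all_saturated, sat_supersets in *;
          tauto
        | intros ? _; exists all_formulas; split; [apply all_formulas_sat_supersets|exact I]
        | lazymatch goal with |- seg_shape _ _ _ _ _ => simpl; repeat split; intro; tauto end ].

Lemma default_segment {s X} :
  saturated s X ->
  exists y : segment s, head y = X /\
    (forall Y, box_successors s X Y -> fBp y Y) /\
    (forall Y, dia_successors s X Y -> fDn y Y).
Proof.
  intro HX; pose proof (saturated_closed HX) as X_closed; destruct s.
  - destruct (segment_of_families (box_successors Spm X) (dia_successors Spm X)
      (box_successors Spm X) (dia_successors Spm X) HX)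
      as (y & Hy & EBp & _ & _ & EDn); try family_bookkeeping.
    exists y; rewrite EBp, EDn; auto.
  - destruct (segment_of_families (box_successors Svee X) (box_successors Svee X)
      (dia_successors Svee X) (dia_successors Svee X) HX)
      as (y & Hy & EBp & _ & _ & EDn); try family_bookkeeping.
    exists y; rewrite EBp, EDn; auto.
  - pose proof (box_dia_successors_join X_closed ltac:(intro; extra_axiom)) as HJ.
    destruct (segment_of_families (box_successors Sjoin X)
      (all_saturated Sjoin) (all_saturated Sjoin)
      (box_successors Sjoin X) HX)
      as (y & Hy & EBp & _ & _ & EDn); try family_bookkeeping.
    + intros Y HY; apply HJ, HY.
    + exists y; rewrite EBp, EDn; split; [exact Hy|split; [auto|intros Y HY; apply HJ, HY]].
  - pose proof (box_dia_successors_join X_closed ltac:(intro; extra_axiom)) as HJ.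
    destruct (segment_of_families (box_successors Sone X) (box_successors Sone X)
      (box_successors Sone X) (box_successors Sone X) HX)
      as (y & Hy & EBp & _ & _ & EDn); try family_bookkeeping.
    + intros Y HY; apply HJ, HY.
    + exists y; rewrite EBp, EDn; split; [exact Hy|split; [auto|intros Y HY; apply HJ, HY]].
Qed.

Definition refutes_neg_box {s} (y : segment s) (a : form) : Prop :=
  forall Y, fBn y Y -> ~ Y (Neg a).
Definition refutes_dia {s} (y : segment s) (a : form) : Prop :=
  forall Y, fDp y Y -> ~ Y a.

Section RefutingSegments.
Variables (X : fset) (a : form).

Lemma refuting_segments_pm :
  saturated Spm X ->
  (~ X (Neg (Box a)) -> exists y : segment Spm, head y = X /\ refutes_neg_box y a) /\
  (~ X (Dia a) -> exists y : segment Spm, head y = X /\ refutes_dia y a).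
Proof.
  intro HX; pose proof (saturated_closed HX) as X_closed; split; intro Ha.
  - destruct (segment_of_families (box_successors Spm X) (avoiding (dia_successors Spm X) (Neg a))
      (box_successors Spm X) (avoiding (dia_successors Spm X) (Neg a)) HX)
      as (y & Hy & _ & E & _); try family_bookkeeping.
    + intros c Hc; apply (extend_refuting (dia_core_closed X_closed)).
      intro H; apply Ha; refine (closed_theorem_mp2 X_closed (d_ax _ _) H Hc); extra_axiom.
    + exists y; split; [exact Hy|intro Y; rewrite E; now intros []].
  - destruct (segment_of_families (avoiding (box_successors Spm X) a) (dia_successors Spm X)
      (avoiding (box_successors Spm X) a) (dia_successors Spm X) HX)
      as (y & Hy & _ & _ & E & _); try family_bookkeeping.
    + intros c Hc; apply (extend_refuting (box_core_closed X_closed)).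
      intro H; apply Ha; refine (closed_theorem_mp2 X_closed (d_ax _ _) H Hc); extra_axiom.
    + exists y; split; [exact Hy|intro Y; rewrite E; now intros []].
Qed.

Lemma refuting_segments_vee :
  saturated Svee X ->
  (~ X (Neg (Box a)) -> exists y : segment Svee, head y = X /\ refutes_neg_box y a) /\
  (~ X (Dia a) -> exists y : segment Svee, head y = X /\ refutes_dia y a).
Proof.
  intro HX; pose proof (saturated_closed HX) as X_closed; split; intro Ha.
  - destruct (segment_of_families (avoiding (box_successors Svee X) (Neg a))
      (avoiding (box_successors Svee X) (Neg a)) (dia_successors Svee X) (dia_successors Svee X) HX)
      as (y & Hy & _ & E & _); try family_bookkeeping.
    + intros c Hc; apply (extend_refuting (box_core_closed X_closed)).
      intro H; apply Ha, (neg_box_dneg X_closed).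
      refine (closed_theorem_mp2 X_closed (d_ax _ _) H (proj1 (neg_box_dneg X_closed c) Hc)).
      extra_axiom.
    + exists y; split; [exact Hy|intro Y; rewrite E; now intros []].
  - destruct (segment_of_families (box_successors Svee X) (box_successors Svee X)
      (avoiding (dia_successors Svee X) a) (avoiding (dia_successors Svee X) a) HX)
      as (y & Hy & _ & _ & E & _); try family_bookkeeping.
    + intros c Hc; apply (extend_refuting (dia_core_closed X_closed)).
      intro H; apply Ha; refine (closed_theorem_mp2 X_closed (d_ax _ _) H Hc); extra_axiom.
    + exists y; split; [exact Hy|intro Y; rewrite E; now intros []].
Qed.

Lemma refuting_segments_join :
  saturated Sjoin X ->
  (~ X (Neg (Box a)) -> exists y : segment Sjoin, head y = X /\ refutes_neg_box y a) /\
  (~ X (Dia a) -> exists y : segment Sjoin, head y = X /\ refutes_dia y a).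
Proof.
  intro HX; pose proof (saturated_closed HX) as X_closed.
  pose proof (box_dia_successors_join X_closed ltac:(intro; extra_axiom)) as HJ.
  split; intro Ha.
  - destruct (segment_of_families (box_successors Sjoin X) (avoiding (all_saturated Sjoin) (Neg a))
      (avoiding (all_saturated Sjoin) (Neg a)) (box_successors Sjoin X) HX)
      as (y & Hy & _ & E & _); try family_bookkeeping.
    + intros Y HY; apply HJ, HY.
    + intros c Hc; apply (extend_refuting (derivable_closed _)).
      intro H; apply Ha, (closed_theorem_mp X_closed (d_boxN _ H) Hc).
    + intros c Hc; apply (extend_refuting (derivable_closed _)).
      intro H; apply Ha, (neg_box_dneg X_closed), (dia_neg_box_neg_join X_closed); [extra_axiom|].
      exact (closed_theorem_mp X_closed (d_diaP _ H) Hc).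
    + exists y; split; [exact Hy|intro Y; rewrite E; now intros []].
  - destruct (segment_of_families (box_successors Sjoin X) (avoiding (all_saturated Sjoin) a)
      (avoiding (all_saturated Sjoin) a) (box_successors Sjoin X) HX)
      as (y & Hy & _ & _ & E & _); try family_bookkeeping.
    + intros Y HY; apply HJ, HY.
    + intros c Hc; apply (extend_refuting (derivable_closed _)).
      intro H; apply Ha, (dia_neg_box_neg_join X_closed); [extra_axiom|].
      apply (closed_theorem_mp X_closed (d_boxN _ (derivable_compose H (derivable_dneg_intro a)))).
      exact Hc.
    + intros c Hc; apply (extend_refuting (derivable_closed _)).
      intro H; apply Ha, (closed_theorem_mp X_closed (d_diaP _ H) Hc).
    + exists y; split; [exact Hy|intro Y; rewrite E; now intros []].
Qed.

Lemma refuting_segments_one :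
  saturated Sone X ->
  (~ X (Neg (Box a)) -> exists y : segment Sone, head y = X /\ refutes_neg_box y a) /\
  (~ X (Dia a) -> exists y : segment Sone, head y = X /\ refutes_dia y a).
Proof.
  intro HX; pose proof (saturated_closed HX) as X_closed.
  pose proof (box_dia_successors_join X_closed ltac:(intro; extra_axiom)) as HJ.
  split; intro Ha.
  - destruct (segment_of_families (avoiding (box_successors Sone X) (Neg a))
      (avoiding (box_successors Sone X) (Neg a)) (avoiding (box_successors Sone X) (Neg a))
      (avoiding (box_successors Sone X) (Neg a)) HX)
      as (y & Hy & _ & E & _); try family_bookkeeping.
    + intros Y [HY _]; apply HJ, HY.
    + intros c Hc; apply (extend_refuting (box_core_closed X_closed)).
      intro H; apply Ha, (neg_box_dneg X_closed).
      refine (closed_theorem_mp2 X_closed (d_ax _ _) H (proj1 (neg_box_dneg X_closed c) Hc)).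
      extra_axiom.
    + intros c Hc; apply (extend_refuting (box_core_closed X_closed)).
      intro H; apply Ha, (neg_box_dneg X_closed), (dia_neg_box_neg_join X_closed); [extra_axiom|].
      refine (closed_theorem_mp2 X_closed (d_ax _ _) H Hc); extra_axiom.
    + exists y; split; [exact Hy|intro Y; rewrite E; now intros []].
  - destruct (segment_of_families (avoiding (box_successors Sone X) a)
      (avoiding (box_successors Sone X) a) (avoiding (box_successors Sone X) a)
      (avoiding (box_successors Sone X) a) HX)
      as (y & Hy & _ & _ & E & _); try family_bookkeeping.
    + intros Y [HY _]; apply HJ, HY.
    + intros c Hc; apply (extend_refuting (box_core_closed X_closed)).
      intro H; apply Ha, (dia_neg_box_neg_join X_closed); [extra_axiom|].
      refine (closed_theorem_mp2 X_closed (d_ax _ _) H (proj1 (neg_box_dneg X_closed c) Hc)).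
      extra_axiom.
    + intros c Hc; apply (extend_refuting (box_core_closed X_closed)).
      intro H; apply Ha; refine (closed_theorem_mp2 X_closed (d_ax _ _) H Hc); extra_axiom.
    + exists y; split; [exact Hy|intro Y; rewrite E; now intros []].
Qed.

End RefutingSegments.

Lemma refuting_segments {s X} a :
  saturated s X ->
  (~ X (Neg (Box a)) -> exists y : segment s, head y = X /\ refutes_neg_box y a) /\
  (~ X (Dia a) -> exists y : segment s, head y = X /\ refutes_dia y a).
Proof.
  destruct s; [apply refuting_segments_pm|apply refuting_segments_vee
              |apply refuting_segments_join|apply refuting_segments_one].
Qed.

Lemma mem_fam_self (P : family) Y : P Y -> mem_fam P Y.
Proof. intro HY; exists Y; split; [exact HY|intro; reflexivity]. Qed.

Lemma segment_of_saturated {s D} : saturated s D -> exists z : segment s, head z = D.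
Proof. intro HD; destruct (default_segment HD) as (z & Hz & _); now exists z. Qed.

Section CanonicalRefutations.
Context {s : star} (x : segment s).
Let X_closed := saturated_closed (head_sat x).

Lemma canon_refute_imp a c :
  ~ head x (Imp a c) -> exists y, le (canon s) x y /\ head y a /\ ~ head y c.
Proof.
  intro Hac; destruct (extend_refuting X_closed a c Hac) as (D & [[HD HxD] Hc] & Ha).
  destruct (segment_of_saturated HD) as [y <-]; now exists y.
Qed.

Lemma canon_refute_box a :
  ~ head x (Box a) -> exists y z, le (canon s) x y /\ RBp (canon s) y z /\ ~ head z a.
Proof.
  intro Ha; destruct (default_segment (head_sat x)) as (y & Hy & HBp & _).
  destruct (extend_avoiding (box_core_closed X_closed) a Ha) as (D & HD & HDa).
  destruct (segment_of_saturated (proj1 HD)) as [z Hz].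
  exists y, z; split; [|split]; simpl; rewrite ?Hy, ?Hz; auto.
  now apply mem_fam_self, HBp.
Qed.

Lemma canon_refute_neg_dia a :
  ~ head x (Neg (Dia a)) -> exists y z, le (canon s) x y /\ RDn (canon s) y z /\ ~ head z (Neg a).
Proof.
  intro Ha; destruct (default_segment (head_sat x)) as (y & Hy & _ & HDn).
  destruct (extend_avoiding (dia_core_closed X_closed) (Neg a)) as (D & HD & HDa).
  { now rewrite (dia_core_neg X_closed). }
  destruct (segment_of_saturated (proj1 HD)) as [z Hz].
  exists y, z; split; [|split]; simpl; rewrite ?Hy, ?Hz; auto.
  now apply mem_fam_self, HDn.
Qed.

Lemma canon_refute_neg_box a :
  ~ head x (Neg (Box a)) ->
  exists y, le (canon s) x y /\ forall z, RBn (canon s) y z -> ~ head z (Neg a).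
Proof.
  intro Ha; destruct (proj1 (refuting_segments a (head_sat x)) Ha) as (y & Hy & HBn).
  exists y; split; [simpl; now rewrite Hy|].
  intros z (Y & HY & EY) Hz; exact (HBn Y HY (proj2 (EY _) Hz)).
Qed.

Lemma canon_refute_dia a :
  ~ head x (Dia a) ->
  exists y, le (canon s) x y /\ forall z, RDp (canon s) y z -> ~ head z a.
Proof.
  intro Ha; destruct (proj2 (refuting_segments a (head_sat x)) Ha) as (y & Hy & HDp).
  exists y; split; [simpl; now rewrite Hy|].
  intros z (Y & HY & EY) Hz; exact (HDp Y HY (proj2 (EY _) Hz)).
Qed.

End CanonicalRefutations.

Definition canonical_truth (s : star) (f : form) : Prop :=
  forall x : segment s,
    (supp (canon s) f true x <-> head x f) /\
    (supp (canon s) f false x <-> head x (Neg f)).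

Section TruthLemma.
Context {s : star}.

Lemma canonical_truth_var p : canonical_truth s (Var p).
Proof. intro x; simpl; tauto. Qed.

Lemma canonical_truth_neg a : canonical_truth s a -> canonical_truth s (Neg a).
Proof.
  intros IH x; pose proof (saturated_closed (head_sat x)) as HX; simpl.
  rewrite (proj1 (IH x)), (proj2 (IH x)), (closed_iff HX (derivable_N4 _ _ (N1 a))); tauto.
Qed.

Lemma canonical_truth_conj a c :
  canonical_truth s a -> canonical_truth s c -> canonical_truth s (Conj a c).
Proof.
  intros IHa IHc x; pose proof (head_sat x) as HX; simpl.
  rewrite (proj1 (IHa x)), (proj2 (IHa x)), (proj1 (IHc x)), (proj2 (IHc x)).
  rewrite (closed_iff (saturated_closed HX) (derivable_N4 _ _ (N2 a c))).
  now rewrite (closed_conj (saturated_closed HX)), (saturated_disj _ _ HX).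
Qed.

Lemma canonical_truth_disj a c :
  canonical_truth s a -> canonical_truth s c -> canonical_truth s (Disj a c).
Proof.
  intros IHa IHc x; pose proof (head_sat x) as HX; simpl.
  rewrite (proj1 (IHa x)), (proj2 (IHa x)), (proj1 (IHc x)), (proj2 (IHc x)).
  rewrite (closed_iff (saturated_closed HX) (derivable_N4 _ _ (N3 a c))).
  now rewrite (closed_conj (saturated_closed HX)), (saturated_disj _ _ HX).
Qed.

Lemma canonical_truth_imp a c :
  canonical_truth s a -> canonical_truth s c -> canonical_truth s (Imp a c).
Proof.
  intros IHa IHc x; pose proof (saturated_closed (head_sat x)) as HX; simpl; split.
  - split.
    + intro H; apply NNPP; intro Hac.
      destruct (canon_refute_imp x a c Hac) as (y & Hxy & Ha & Hc).
      apply Hc, IHc, H, IHa, Ha; exact Hxy.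
    + intros Hac y Hxy Ha; apply IHc.
      exact (closed_mp (saturated_closed (head_sat y)) (Hxy _ Hac) (proj1 (proj1 (IHa y)) Ha)).
  - rewrite (proj1 (IHa x)), (proj2 (IHc x)), (closed_iff HX (derivable_N4 _ _ (N4 a c))).
    now rewrite (closed_conj HX).
Qed.

Lemma canonical_truth_box a : canonical_truth s a -> canonical_truth s (Box a).
Proof.
  intros IH x; simpl; split; split.
  - intro H; apply NNPP; intro Ha.
    destruct (canon_refute_box x a Ha) as (y & z & Hxy & Hyz & Hz).
    exact (Hz (proj1 (proj1 (IH z)) (H y Hxy z Hyz))).
  - intros Ha y Hxy z (Y & HY & EY); apply IH, EY, (seg_Bp y a (Hxy _ Ha) Y HY).
  - intro H; apply NNPP; intro Ha.
    destruct (canon_refute_neg_box x a Ha) as (y & Hxy & Hy).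
    destruct (H y Hxy) as (z & Hyz & Hz); exact (Hy z Hyz (proj1 (proj2 (IH z)) Hz)).
  - intros Ha y Hxy; destruct (seg_Bn y a (Hxy _ Ha)) as (Y & HY & HYa).
    destruct (segment_of_saturated (fBn_sat y Y HY)) as [z <-].
    exists z; split; [now apply mem_fam_self|now apply IH].
Qed.

Lemma canonical_truth_dia a : canonical_truth s a -> canonical_truth s (Dia a).
Proof.
  intros IH x; simpl; split; split.
  - intro H; apply NNPP; intro Ha.
    destruct (canon_refute_dia x a Ha) as (y & Hxy & Hy).
    destruct (H y Hxy) as (z & Hyz & Hz); exact (Hy z Hyz (proj1 (proj1 (IH z)) Hz)).
  - intros Ha y Hxy; destruct (seg_Dp y a (Hxy _ Ha)) as (Y & HY & HYa).
    destruct (segment_of_saturated (fDp_sat y Y HY)) as [z <-].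
    exists z; split; [now apply mem_fam_self|now apply IH].
  - intro H; apply NNPP; intro Ha.
    destruct (canon_refute_neg_dia x a Ha) as (y & z & Hxy & Hyz & Hz).
    exact (Hz (proj1 (proj2 (IH z)) (H y Hxy z Hyz))).
  - intros Ha y Hxy z (Y & HY & EY); apply IH, EY, (seg_Dn y a (Hxy _ Ha) Y HY).
Qed.

End TruthLemma.

Theorem lemma3 (s : star) (f : form) (x : segment s) :
  (supp (canon s) f true x <-> head x f) /\
  (supp (canon s) f false x <-> head x (Neg f)).
Proof.
  revert x; change (canonical_truth s f).
  induction f.
  - apply canonical_truth_var.
  - now apply canonical_truth_neg.
  - now apply canonical_truth_conj.
  - now apply canonical_truth_disj.
  - now apply canonical_truth_imp.
  - now apply canonical_truth_box.
  - now apply canonical_truth_dia.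
Qed.
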